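(* Let $A=\mathbb{F}_q[t]$ and let $f_1,\ldots,f_r,g\in A$ be non-constant. Let $f$ be a polynomial function from $A/f_1A\times\cdots\times A/f_rA$ to $A/gA$. Then $f$ is represented by exactly one polynomial of the form $$F=\sum_{\mathbf{k}}b_{\mathbf{k}}(\mathbf{x})_{\mathbf{k}},$$ where the sum is over all $\mathbf{k}=(k_1,\ldots,k_r)\in\mathbb{N}^r$ with $0\le k_i<\mu(f_i,g)$ for each $i$, and the coefficients $b_{\mathbf{k}}\in A$ satisfy $b_{\mathbf{k}}=0$ or $$\deg b_{\mathbf{k}}<\deg\frac{g}{\gcd\!\Big(g,\prod_{i=1}^r\prod_{j=0}^{k_i-1}(a_{k_i}-a_j)\Big)}.$$
   Context: Write $\mathbb{F}_q=\{a_0=0,a_1,\ldots,a_{q-1}\}$. For $k\in\mathbb{N}$ with base-$q$ expansion $k=c_0+c_1q+\cdots+c_hq^h$ ($0\le c_s<q$), define $a_k=a_{c_0}+a_{c_1}t+\cdots+a_{c_h}t^h\in A$. Thus $\{a_0,\ldots,a_{q^d-1}\}$ is the set of polynomials of degree $<d$. For each $i$, $A/f_iA$ is identified with the complete residue system $\{a_0,\ldots,a_{q^{\deg f_i}-1}\}$ (polynomials of degree $<\deg f_i$). A function $f$ from $A/f_1A\times\cdots\times A/f_rA$ to $A/gA$ is a polynomial function (and $F\in A[x_1,\ldots,x_r]$ represents it) if $F(b_1,\ldots,b_r)\equiv f(b_1,\ldots,b_r)\pmod g$ for all $(b_1,\ldots,b_r)$ with $\deg b_i<\deg f_i$ (i.e.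 $b_i\in\{a_0,\ldots,a_{q^{\deg f_i}-1}\}$) for each $i$. For $\mathbf{k}\in\mathbb{N}^r$, $(\mathbf{x})_{\mathbf{k}}=\prod_{i=1}^r(x_i-a_0)(x_i-a_1)\cdots(x_i-a_{k_i-1})$ (empty product $=1$). $\lambda(g)$ is the smallest positive integer $k$ such that $g\mid\prod_{j=0}^{k-1}(a_k-a_j)$, and $\mu(f_i,g)=\min(q^{\deg f_i},\lambda(g))$. *)

(* A = F_q[t] is {poly F} for F : finFieldType (q = #|F|). *)
From HB Require Import structures.
From mathcomp Require Import all_boot all_order all_algebra.
Set Implicit Arguments. Unset Strict Implicit. Unset Printing Implicit Defensive.
Import GRing.Theory.
Local Open Scope ring_scope.

Section Defs.
Variable F : finFieldType.
(* The enumeration F_q = {a_0 = 0, a_1, ..., a_(q-1)} is given by e : nat -> F,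
   required (in the theorem) to satisfy e 0 = 0 and to be injective on [0, q). *)
Variable e : nat -> F.

Definition qq : nat := #|F|.

Definition pdeg (p : {poly F}) : nat := (size p).-1.

(* a_k = a_{c_0} + a_{c_1} t + ... + a_{c_h} t^h, k = sum c_s q^s;
   digits beyond h are 0 and a_0 = 0, so summing over s <= k is harmless. *)
Definition aa (k : nat) : {poly F} :=
  \sum_(s < k.+1) (e ((k %/ qq ^ s) %% qq))%:P * 'X^s.

Definition aprod (k : nat) : {poly F} := \prod_(j < k) (aa k - aa j).

(* lambda(g): the smallest positive k with g | prod_{j<k}(a_k - a_j).
   Such k exists and is <= q^(deg g) (for k = q^d, d >= deg g, the product
   is the product of all monic polynomials of degree d); we search
   k = 1, ..., q^(size g). *)
Definition lam (g : {poly F}) : nat :=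
  (find (fun k => g %| aprod k) (iota 1 (qq ^ size g))).+1.

Definition mu (fi g : {poly F}) : nat := minn (qq ^ pdeg fi) (lam g).

(* multivariate polynomial in A[x_1..x_r], as a finite list of monomial terms
   (coefficient, exponent vector) *)
Definition mpoly (r : nat) := seq ({poly F} * ('I_r -> nat)).

Definition meval (r : nat) (P : mpoly r) (x : 'I_r -> {poly F}) : {poly F} :=
  \sum_(m <- P) m.1 * \prod_(i < r) x i ^+ m.2 i.

Definition admissible (r : nat) (fs : 'I_r -> {poly F}) (x : 'I_r -> {poly F}) :=
  forall i, (size (x i) <= pdeg (fs i))%N.

Definition represents (r : nat) (fs : 'I_r -> {poly F}) (g : {poly F})
  (f : ('I_r -> {poly F}) -> {poly F}) (G : ('I_r -> {poly F}) -> {poly F}) :=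
  forall x, admissible fs x -> g %| (G x - f x).

Definition is_poly_fun (r : nat) (fs : 'I_r -> {poly F}) (g : {poly F})
  (f : ('I_r -> {poly F}) -> {poly F}) :=
  exists P : mpoly r, represents fs g f (meval P).

Definition ffact (r : nat) (k : {ffun 'I_r -> nat}) (x : 'I_r -> {poly F}) : {poly F} :=
  \prod_(i < r) \prod_(j < k i) (x i - aa j).

Definition in_range (r : nat) (fs : 'I_r -> {poly F}) (g : {poly F})
  (k : {ffun 'I_r -> nat}) : bool := [forall i, (k i < mu (fs i) g)%N].

(* the polynomial sum_k b_k (x)_k over k with 0 <= k_i < mu(f_i, g);
   since mu <= lam g we enumerate k_i in 'I_(lam g) and filter *)
Definition ffsum (r : nat) (fs : 'I_r -> {poly F}) (g : {poly F})
  (b : {ffun 'I_r -> nat} -> {poly F}) (x : 'I_r -> {poly F}) : {poly F} :=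
  \sum_(k : {ffun 'I_r -> 'I_(lam g)} | in_range fs g [ffun i => val (k i)])
     b [ffun i => val (k i)] * ffact [ffun i => val (k i)] x.

Definition coef_ok (r : nat) (g : {poly F}) (k : {ffun 'I_r -> nat}) (bk : {poly F}) : bool :=
  (bk == 0) || (pdeg bk < pdeg (g %/ gcdp g (\prod_(i < r) aprod (k i))))%N.

Definition coefs_ok (r : nat) (fs : 'I_r -> {poly F}) (g : {poly F})
  (b : {ffun 'I_r -> nat} -> {poly F}) :=
  forall k, in_range fs g k -> coef_ok g k (b k).

End Defs.

From HB Require Import structures.
From mathcomp Require Import all_boot all_order all_algebra.
From mathcomp Require Import ring zify.
From Stdlib Require Import Classical.
Set Implicit Arguments. Unset Strict Implicit. Unset Printing Implicit Defensive.
Import GRing.Theory.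
Local Open Scope ring_scope.

(* Every monomial is an A-combination of the products (x)_k (the coefficients being
   generalised Stirling numbers), and modulo g on admissible points (x)_k vanishes as
   soon as some k_i >= mu(f_i, g): either a factor x_i - a_j is zero (k_i >= q^deg f_i),
   or (x)_k is a multiple of prod_(j < lambda(g)) (x_i - a_j), which is divisible by
   prod_(j < lambda(g)) (a_lambda(g) - a_j), hence by g.
   That divisibility, prod_(j<k) (a_k - a_j) | prod_(j<k) (x - a_j) for every x, is
   proved prime power by prime power: for Q of degree m, the values a_(l q^m + i),
   i < q^m, meet every residue class modulo Q exactly once, so at least k %/ q^m of the
   x - a_j and exactly k %/ q^m of the a_k - a_j (j < k) are multiples of Q.
   Reducing each coefficient modulo g / gcd(g, prod_i prod_(j<k_i) (a_(k_i) - a_j))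
   gives existence; for uniqueness, evaluate the difference of two representations at
   the points (a_(k_i))_i in increasing order of k: only the diagonal term survives. *)

Section PolyDivisibility.
Variable R : fieldType.
Implicit Types (p d g h c P Q : {poly R}) (u v : nat -> {poly R}).

Lemma dvdp_sum I (s : seq I) (P : pred I) (u : I -> {poly R}) g :
  (forall i, P i -> g %| u i) -> g %| \sum_(i <- s | P i) u i.
Proof.
move=> dvd_u; apply: (big_ind (fun y => g %| y)) => [|y1 y2|i /dvd_u //].
  exact: dvdp0.
exact: dvdp_add.
Qed.

Lemma divp_gcdp_neq0 g h : g != 0 -> g %/ gcdp g h != 0.
Proof.
by move=> g0; apply: contraNneq g0 => gq0; rewrite -(divpK (dvdp_gcdl g h)) gq0 mul0r.
Qed.

Lemma divp_gcdp_dvdp g h c : g != 0 -> g %| c * h -> g %/ gcdp g h %| c.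
Proof.
move=> g0; have G0 : gcdp g h != 0 by rewrite gcdp_eq0 negb_and g0.
have def_g : g = g %/ gcdp g h * gcdp g h by rewrite divpK ?dvdp_gcdl.
have def_h : h = h %/ gcdp g h * gcdp g h by rewrite divpK ?dvdp_gcdr.
rewrite {1}def_g [X in _ %| _ * X]def_h mulrA dvdp_mul2r //.
by rewrite Gauss_dvdpl // coprimep_div_gcd ?g0.
Qed.

Lemma dvdp_mul_divp_gcdp g h : g %| g %/ gcdp g h * h.
Proof. by rewrite -{1}(divpK (dvdp_gcdl g h)) dvdp_mul ?dvdp_gcdr. Qed.

Lemma exists_irreducible_dvdp p : (1 < size p)%N ->
  exists2 P, irreducible_poly P & P %| p.
Proof.
move: (ltnSn (size p)); move: {2}(size p).+1 => n.
elim: n p => [|n IH] p lt_pn p_gt1; first by [].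
have [p_irr|p_red] := classic (irreducible_poly p); first by exists p.
have [d [d_n1 dp d_np]] : exists d, [/\ size d != 1%N, d %| p & ~~ (d %= p)].
  apply: NNPP => none; apply: p_red; split=> // d d_n1 dp.
  by apply/negPn/negP => d_np; apply: none; exists d.
have p0 : p != 0 by rewrite -size_poly_eq0 -lt0n ltnW.
have d0 : d != 0 by apply: contraNneq p0 => d0; move: dp; rewrite d0 dvd0p.
have lt_dp : (size d < size p)%N by rewrite ltn_neqAle dvdp_size_eqp // d_np dvdp_leq.
have d_gt1 : (1 < size d)%N by rewrite ltn_neqAle eq_sym d_n1 lt0n size_poly_eq0.
have [P P_irr Pd] := IH d (leq_trans lt_dp lt_pn) d_gt1.
by exists P => //; apply: dvdp_trans dp.
Qed.

Definition count_dvdp n Q u : nat := \sum_(i < n) (Q %| u i)%R.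

Definition divp_at u i0 P : nat -> {poly R} :=
  fun i => if i == i0 then u i %/ P else u i.

Lemma prod_divp_at n u (i0 : 'I_n) P : P %| u i0 ->
  \prod_(i < n) u i = P * \prod_(i < n) divp_at u i0 P i.
Proof.
move=> Pu; rewrite (bigD1 i0) // [X in _ = _ * X](bigD1 i0) //= /divp_at eqxx.
by rewrite mulrA divpKC //; congr (_ * _); apply: eq_bigr => i ne_i; rewrite ifN.
Qed.

Lemma eqp_count_dvdp n Q Q' u : Q %= Q' -> count_dvdp n Q u = count_dvdp n Q' u.
Proof. by move=> eqQ; apply: eq_bigr => i _; rewrite (eqp_dvdl _ eqQ). Qed.

Lemma count_dvdp_divp_at_coprime n Q u (i0 : 'I_n) P :
  coprimep Q P -> P %| u i0 -> count_dvdp n Q (divp_at u i0 P) = count_dvdp n Q u.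
Proof.
move=> coQP Pu; apply: eq_bigr => i _; rewrite /divp_at.
by case: eqP => // ->; rewrite -{2}(divpK Pu) Gauss_dvdpl.
Qed.

Lemma count_dvdp_divp_at_expr n u (i0 : 'I_n) P k : P != 0 -> P %| u i0 ->
  count_dvdp n (P ^+ k) (divp_at u i0 P) =
  ((P ^+ k.+1 %| u i0)%R + \sum_(i < n | i != i0) (P ^+ k %| u i)%R)%N.
Proof.
move=> P0 Pu; rewrite /count_dvdp (bigD1 i0) //= /divp_at eqxx.
rewrite -{2}(divpK Pu) exprSr dvdp_mul2r //; congr (_ + _).
by apply: eq_bigr => i ne_i; rewrite ifN.
Qed.

Lemma exists_max_expr_dvdp n u P (i0 : 'I_n) :
  (forall i : 'I_n, u i != 0) -> (1 < size P)%N -> P %| u i0 ->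
  exists s (i1 : 'I_n),
    [/\ (0 < s)%N, P ^+ s %| u i1 & forall i : 'I_n, ~~ (P ^+ s.+1 %| u i)].
Proof.
move=> u0 P_gt1 Pu.
pose divides_some k := [exists i : 'I_n, P ^+ k %| u i].
have ub k : divides_some k -> (k <= \sum_(i < n) size (u i))%N.
  case/existsP=> i Pk_ui; apply: (@leq_trans ((size P).-1 * k)).
    by rewrite leq_pmull // -subn1 subn_gt0.
  rewrite -size_exp; apply: leq_trans (leq_pred _) _.
  apply: leq_trans (dvdp_leq (u0 i) Pk_ui) _.
  by rewrite (bigD1 i) //= leq_addr.
have some1 : divides_some 1%N by apply/existsP; exists i0; rewrite expr1.
have [s /existsP[i1 Ps_u] s_max] := ex_maxnP (ex_intro divides_some 1%N some1) ub.
exists s, i1; split=> // [|i]; first exact: s_max.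
apply/negP => Ps1_u.
by have := s_max s.+1 (introT existsP (ex_intro _ i Ps1_u)); rewrite ltnn.
Qed.

Lemma count_dvdp_divp_at_le n u v P s (i1 j1 : 'I_n) :
  irreducible_poly P -> (0 < s)%N -> P ^+ s %| u i1 -> P ^+ s %| v j1 ->
  (forall i : 'I_n, ~~ (P ^+ s.+1 %| u i)) ->
  (forall Q k, irreducible_poly Q ->
     (count_dvdp n (Q ^+ k) u <= count_dvdp n (Q ^+ k) v)%N) ->
  forall Q k, irreducible_poly Q ->
  (count_dvdp n (Q ^+ k) (divp_at u i1 P) <= count_dvdp n (Q ^+ k) (divp_at v j1 P))%N.
Proof.
move=> P_irr s_gt0 Ps_u Ps_v s_max le_uv Q k Q_irr.
have P0 := irredp_neq0 P_irr.
have dvd_exp m w : (m <= s)%N -> P ^+ s %| w -> P ^+ m %| w.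
  by move=> le_ms; apply: dvdp_trans; rewrite dvdp_exp2l.
have P_Ps := dvdp_exp s_gt0 (dvdpp P).
have [Pu Pv] := (dvdp_trans P_Ps Ps_u, dvdp_trans P_Ps Ps_v).
have [coQP|] := boolP (coprimep Q P).
  by rewrite !count_dvdp_divp_at_coprime ?coprimep_expl ?le_uv.
rewrite irreducible_poly_coprime // negbK => QP.
have eqQP : Q %= P by apply: P_irr.2 => //; rewrite neq_ltn Q_irr.1 orbT.
rewrite !(eqp_count_dvdp _ _ (eqp_exp k eqQP)) !count_dvdp_divp_at_expr //.
have := le_uv P k P_irr.
rewrite /count_dvdp (bigD1 i1) //= [X in (_ <= X)%N -> _](bigD1 j1) //=.
have [lt_ks|le_sk] := ltnP k s.
  have le_ks := ltnW lt_ks.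
  by rewrite !(dvd_exp k.+1 _ lt_ks, dvd_exp k _ le_ks).
have -> : (P ^+ k.+1 %| u i1) = false.
  by apply: contraNF (s_max i1); apply: dvdp_trans; rewrite dvdp_exp2l.
have [->|ne_ks] := eqVneq k s.
  by rewrite Ps_u Ps_v !add1n ltnS => /leq_trans; apply; rewrite leq_addl.
rewrite big1 // => i _; apply/eqP; rewrite eqb0.
apply: contraNN (s_max i); apply: dvdp_trans; rewrite dvdp_exp2l //.
by rewrite ltn_neqAle eq_sym ne_ks.
Qed.

Lemma prod_dvdp_count n u v :
  (forall i : 'I_n, u i != 0) ->
  (forall P k, irreducible_poly P ->
     (count_dvdp n (P ^+ k) u <= count_dvdp n (P ^+ k) v)%N) ->
  \prod_(i < n) u i %| \prod_(i < n) v i.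
Proof.
move: {2}(\sum_(i < n) size (u i))%N (erefl (\sum_(i < n) size (u i))%N) => M.
elim/ltn_ind: M u v => M IH u v sizeM u0 le_uv.
have [units|/forallPn[i0 ui0_n1]] := boolP [forall i : 'I_n, size (u i) == 1%N].
  apply: dvdp_trans (dvd1p _); apply: (big_ind (fun p => p %| 1)) => [|p1 p2 p1_1 p2_1|i _].
  - exact: dvdpp.
  - by rewrite -[1](mulr1 1); apply: dvdp_mul.
  - by rewrite dvdp1 (forallP units).
have ui0_gt1 : (1 < size (u i0))%N.
  by rewrite ltn_neqAle eq_sym ui0_n1 lt0n size_poly_eq0 u0.
have [P P_irr Pu] := exists_irreducible_dvdp ui0_gt1.
have [s [i1 [s_gt0 Ps_u s_max]]] := exists_max_expr_dvdp u0 P_irr.1 Pu.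
have [j1 Ps_v] : exists j1 : 'I_n, P ^+ s %| v j1.
  have [/existsP//|/existsPn none] := boolP [exists j : 'I_n, P ^+ s %| v j].
  have := le_uv P s P_irr; rewrite /count_dvdp [X in (_ <= X)%N -> _]big1 => [|j _].
    by rewrite leqn0 sum_nat_eq0 => /forallP/(_ i1); rewrite Ps_u.
  by rewrite (negbTE (none j)).
have P0 := irredp_neq0 P_irr.
have P_Ps := dvdp_exp s_gt0 (dvdpp P).
have [Pu1 Pv1] := (dvdp_trans P_Ps Ps_u, dvdp_trans P_Ps Ps_v).
rewrite (prod_divp_at Pu1) (prod_divp_at Pv1) dvdp_mul2l //.
apply: (IH _ _ _ _ erefl) => [|i|].
- rewrite -sizeM (bigD1 i1) //= [X in (_ < X)%N](bigD1 i1) //= /divp_at eqxx.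
  rewrite (eq_bigr (fun i : 'I_n => size (u i))) => [|i ne_i]; last by rewrite ifN.
  rewrite ltn_add2r size_divp // ltn_subrL -subn1 subn_gt0 P_irr.1.
  by rewrite lt0n size_poly_eq0 u0.
- rewrite /divp_at; case: ifP => [/eqP ->|_]; last exact: u0.
  by apply: contraNneq (u0 i1) => q0; rewrite -(divpK Pu1) q0 mul0r.
- exact: count_dvdp_divp_at_le P_irr s_gt0 Ps_u Ps_v s_max le_uv.
Qed.
End PolyDivisibility.

Lemma sum_ord_blocks (G : nat -> nat) K n :
  (\sum_(j < K * n) G j = \sum_(l < K) \sum_(i < n) G (l * n + i))%N.
Proof.
elim: K => [|K IH]; first by rewrite mul0n !big_ord0.
by rewrite big_ord_recr /= -IH mulSnr big_split_ord.
Qed.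

Lemma sum_ffun_ord_lt r N (l k : {ffun 'I_r -> 'I_N}) :
  (forall i, l i <= k i)%N -> l != k ->
  (\sum_(i < r) (l i : nat) < \sum_(i < r) (k i : nat))%N.
Proof.
move=> le_lk ne_lk; have [i0 ne_i0] : exists i0, (l i0 : nat) != k i0.
  apply/existsP; apply: contraNT ne_lk => /existsPn eq_lk.
  by apply/eqP/ffunP => i; apply/val_inj/eqP; rewrite -[_ == _]negbK eq_lk.
rewrite (bigD1 i0) //= [ltnRHS](bigD1 i0) //= -addSn leq_add //.
  by rewrite ltn_neqAle ne_i0 le_lk.
by apply: leq_sum => i _; apply: le_lk.
Qed.

Section Digits.
Variables (F : finFieldType) (e : nat -> F).
Hypotheses (e0 : e 0%N = 0) (e_inj : {in gtn #|F| &, injective e}).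
Local Notation q := (qq F).
Local Notation a := (aa e).
Implicit Types (Q x y : {poly F}).

Lemma qq_gt1 : (1 < q)%N. Proof. exact: card_finNzRing_gt1. Qed.

Lemma qq_gt0 : (0 < q)%N. Proof. exact: ltn_trans qq_gt1. Qed.

Lemma aa_sum N k : (k < q ^ N)%N ->
  a k = \sum_(s < N) (e ((k %/ q ^ s) %% q))%:P * 'X^s.
Proof.
move=> lt_kN; pose t s := (e ((k %/ q ^ s) %% q))%:P * 'X^s : {poly F}.
have widen n : (n <= N + k.+1)%N -> (k < q ^ n)%N ->
    \sum_(s < n) t s = \sum_(s < N + k.+1) t s.
  move=> le_n lt_kn; rewrite (big_ord_widen _ _ le_n) big_mkcond; apply: eq_bigr => s _.
  case: ltnP => // le_ns; rewrite /t divn_small ?mod0n ?e0 ?mul0r //.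
  by apply: leq_trans lt_kn _; rewrite leq_exp2l ?qq_gt1.
rewrite /aa -/q (widen k.+1) ?widen ?leq_addr ?leq_addl //.
exact: ltnW (ltn_expl _ qq_gt1).
Qed.

Lemma aa_cons c k : (c < q)%N -> a (c + q * k) = (e c)%:P + 'X * a k.
Proof.
move=> lt_cq; have lt_kq : (k < q ^ k)%N := ltn_expl k qq_gt1.
have lt_ckq : (c + q * k < q ^ k.+1)%N.
  rewrite expnS; apply: (@leq_trans (q * k.+1)); first by rewrite mulnS ltn_add2r.
  by rewrite leq_mul2l lt_kq orbT.
rewrite (aa_sum lt_ckq) (aa_sum lt_kq) big_ord_recl expn0 divn1 expr0 mulr1.
rewrite addnC mulnC modnMDl (modn_small lt_cq) mulr_sumr; congr (_ + _).
apply: eq_bigr => s _; rewrite /= expnS divnMA divnMDl ?qq_gt0 // (divn_small lt_cq).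
by rewrite addn0 exprS mulrCA.
Qed.

Lemma aa0 : a 0 = 0.
Proof. by rewrite /aa big_ord1 div0n mod0n e0 mul0r. Qed.

Lemma aa_edivn k : a k = (e (k %% q))%:P + 'X * a (k %/ q).
Proof. by rewrite -aa_cons ?ltn_pmod ?qq_gt0 // addnC mulnC -divn_eq. Qed.

Lemma e_onto (x : F) : exists2 c, (c < q)%N & e c = x.
Proof.
pose f (i : 'I_q) := e i.
have f_inj : injective f.
  by move=> i j /e_inj; rewrite !inE => /(_ (ltn_ord i) (ltn_ord j)) /val_inj.
have /codomP[i ->] := inj_card_onto f_inj (eq_leq (esym (card_ord q))) x.
by exists i.
Qed.

Lemma aa_inj : injective a.
Proof.
move=> i j; move: {2}(i + j)%N (leqnn (i + j)) => n.
elim: n i j => [|n IH] i j le_ijn; rewrite (aa_edivn i) (aa_edivn j) => eq_a.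
  by move: le_ijn; rewrite leqn0 addn_eq0 => /andP[/eqP-> /eqP->].
have eq_e : e (i %% q) = e (j %% q).
  by have := congr1 (coefp 0) eq_a; rewrite /= !coefD !coefC !coefXM !addr0.
have eq_mod : (i %% q = j %% q)%N by apply: e_inj; rewrite // inE ltn_pmod ?qq_gt0.
move: eq_a; rewrite eq_e => /addrI /(mulfI (negbT (polyX_eq0 _))) eq_a.
have lt_div n0 : (0 < n0)%N -> (n0 %/ q < n0)%N := ltn_Pdiv qq_gt1.
have eq_div : (i %/ q = j %/ q)%N.
  apply: IH eq_a; have := leq_div i q; have := leq_div j q.
  move: (lt_div i) (lt_div j); set di := (i %/ q)%N; set dj := (j %/ q)%N; lia.
by rewrite (divn_eq i q) (divn_eq j q) eq_mod eq_div.
Qed.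

Lemma size_aa d k : (k < q ^ d)%N -> (size (a k) <= d)%N.
Proof.
elim: d k => [|d IH] k; first by rewrite expn0 ltnS leqn0 => /eqP->; rewrite aa0 size_poly0.
move=> lt_kq; rewrite aa_edivn; apply: leq_trans (size_polyD _ _) _.
rewrite geq_max (leq_trans (size_polyC_leq1 _)) //.
have [->|nz_a] := eqVneq (a (k %/ q)) 0; first by rewrite mulr0 size_poly0.
by rewrite mulrC size_mulX // ltnS IH // ltn_divLR ?qq_gt0 // -expnSr.
Qed.

Lemma aa_onto d x : (size x <= d)%N -> exists2 k, (k < q ^ d)%N & a k = x.
Proof.
elim: d x => [|d IH] x.
  by rewrite leqn0 size_poly_eq0 => /eqP->; exists 0%N; rewrite ?aa0 ?expn0.
move=> le_xd; have [c lt_cq ec] := e_onto x.[0].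
have [k lt_kq ak] : exists2 k, (k < q ^ d)%N & a k = x %/ 'X.
  by apply: IH; rewrite size_divp ?polyX_eq0 // size_polyX leq_subLR.
exists (c + q * k)%N.
  rewrite expnS; apply: (@leq_trans (q * k.+1)); first by rewrite mulnS ltn_add2r.
  by rewrite leq_mul2l lt_kq orbT.
rewrite aa_cons // ak ec [RHS](divp_eq x 'X) addrC mulrC.
by rewrite -[X in x %% X]subr0 -polyC0 modp_XsubC.
Qed.

Lemma aa_expq d : a (q ^ d) = (e 1)%:P * 'X^d.
Proof.
elim: d => [|d IH].
  have -> : (q ^ 0 = 1 + q * 0)%N by rewrite muln0.
  by rewrite aa_cons ?qq_gt1 // aa0 mulr0 addr0 mulr1.
have -> : (q ^ d.+1 = 0 + q * q ^ d)%N by rewrite expnS.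
by rewrite aa_cons ?qq_gt0 // e0 add0r IH mulrCA exprS.
Qed.

Lemma aa_block m l i : (i < q ^ m)%N -> a (l * q ^ m + i) = 'X^m * a l + a i.
Proof.
elim: m i => [|m IH] i.
  by rewrite expn0 ltnS leqn0 => /eqP->; rewrite muln1 addn0 aa0 addr0 mul1r.
move=> lt_iq; have lt_divq : (i %/ q < q ^ m)%N by rewrite ltn_divLR ?qq_gt0 // -expnSr.
have -> : (l * q ^ m.+1 + i = i %% q + q * (l * q ^ m + i %/ q))%N.
  by rewrite {1}(divn_eq i q) expnSr mulnDr; ring.
by rewrite aa_cons ?ltn_pmod ?qq_gt0 // IH // (aa_edivn i) exprS mulrDr mulrA addrCA.
Qed.

Lemma eq_aa_dvdp_sub Q m i j : size Q = m.+1 -> (i < q ^ m)%N -> (j < q ^ m)%N ->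
  Q %| a i - a j -> i = j.
Proof.
move=> sQ lt_i lt_j; have [/eqP|nz_ij] := eqVneq (a i - a j) 0.
  by rewrite subr_eq0 => /eqP/aa_inj.
move/(dvdp_leq nz_ij); rewrite sQ leqNgt ltnS; apply: contraNeq => _.
by apply: leq_trans (size_polyD _ _) _; rewrite size_polyN geq_max !size_aa.
Qed.

Lemma count_dvdp_block Q m y l : size Q = m.+1 ->
  (\sum_(i < q ^ m) (Q %| y - a (l * q ^ m + i))%R)%N = 1%N.
Proof.
move=> sQ; set r := (y - 'X^m * a l) %% Q.
have [i0 lt_i0 a_i0] : exists2 i0, (i0 < q ^ m)%N & a i0 = r.
  by apply: aa_onto; rewrite -ltnS -sQ ltn_modp -size_poly_eq0 sQ.
have dvd_i0 : Q %| y - a (l * q ^ m + i0).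
  by rewrite aa_block // a_i0 opprD addrA {1}(divp_eq (y - 'X^m * a l) Q) addrK dvdp_mull.
rewrite (bigD1 (Ordinal lt_i0)) //= dvd_i0 big1 // => i ne_i; apply/eqP; rewrite eqb0.
apply/negP => dvd_i; have := dvdp_sub dvd_i dvd_i0.
rewrite opprB addrC subrKA !aa_block // opprD addrACA subrr add0r.
move/(eq_aa_dvdp_sub sQ lt_i0 (ltn_ord i)) => eq_i.
by move: ne_i; rewrite -val_eqE /= eq_i eqxx.
Qed.

Lemma count_dvdp_sub_aa_blocks Q m y K : size Q = m.+1 ->
  count_dvdp (K * q ^ m) Q (fun j => y - a j) = K.
Proof.
move=> sQ; rewrite /count_dvdp (sum_ord_blocks (fun j => nat_of_bool (Q %| y - a j)%R)).
under eq_bigr => l _ do rewrite (count_dvdp_block _ _ sQ).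
by rewrite sum1_card card_ord.
Qed.

Lemma count_dvdp_sub_aa_ge Q m y k : size Q = m.+1 ->
  (k %/ q ^ m <= count_dvdp k Q (fun j => y - a j)%R)%N.
Proof.
move=> sQ; rewrite -{1}(count_dvdp_sub_aa_blocks y (k %/ q ^ m) sQ) /count_dvdp.
rewrite (big_ord_widen k (fun j => nat_of_bool (Q %| y - a j)%R) (leq_divM _ _)).
by rewrite [leqRHS](bigID (fun j : 'I_k => (j < k %/ q ^ m * q ^ m)%N)) leq_addr.
Qed.

Lemma count_dvdp_aa_sub_aa Q m k : size Q = m.+1 ->
  count_dvdp k Q (fun j => a k - a j) = (k %/ q ^ m)%N.
Proof.
move=> sQ; set K := (k %/ q ^ m)%N; set r := (k %% q ^ m)%N.
have lt_r : (r < q ^ m)%N by rewrite ltn_pmod ?expn_gt0 ?qq_gt0.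
have def_ak : a k = 'X^m * a K + a r by rewrite {1}(divn_eq k (q ^ m)) aa_block.
rewrite -[RHS](count_dvdp_sub_aa_blocks (a k) K sQ) /count_dvdp.
rewrite (big_ord_widen k (fun j => nat_of_bool (Q %| a k - a j)%R) (leq_divM k (q ^ m))).
rewrite [LHS](bigID (fun j : 'I_k => (j < K * q ^ m)%N)) /= [X in (_ + X)%N]big1 ?addn0 //.
move=> j; rewrite -leqNgt => le_Kj; apply/eqP; rewrite eqb0; apply/negP.
have lt_jr : (j - K * q ^ m < r)%N by rewrite ltn_subLR // /r /K -divn_eq.
rewrite -(subnKC le_Kj) def_ak aa_block ?(ltn_trans lt_jr) // opprD addrACA subrr add0r.
move/(eq_aa_dvdp_sub sQ lt_r (ltn_trans lt_jr lt_r)) => eq_r.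
by rewrite eq_r ltnn in lt_jr.
Qed.

Lemma aprod_dvdp k x : aprod e k %| \prod_(j < k) (x - a j).
Proof.
apply: (@prod_dvdp_count _ k (fun j => a k - a j) (fun j => x - a j)) => [i|P l P_irr].
  by rewrite subr_eq0; apply/eqP => /aa_inj eq_ki; move: (ltn_ord i); rewrite -eq_ki ltnn.
have sQ : size (P ^+ l) = (size (P ^+ l)).-1.+1.
  by rewrite prednK // lt0n size_poly_eq0 expf_neq0 // irredp_neq0.
by rewrite (count_dvdp_aa_sub_aa _ sQ) count_dvdp_sub_aa_ge.
Qed.
End Digits.

Section Representation.
Variables (F : finFieldType) (e : nat -> F).
Hypotheses (e0 : e 0%N = 0) (e_inj : {in gtn #|F| &, injective e}).
Local Notation q := (qq F).
Local Notation a := (aa e).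
Implicit Types (g y : {poly F}).

Definition ffact1 j y : {poly F} := \prod_(l < j) (y - a l).

Lemma ffact1S j y : ffact1 j.+1 y = ffact1 j y * (y - a j).
Proof. by rewrite /ffact1 big_ord_recr. Qed.

Lemma ffact1_dvdp m k y : (m <= k)%N -> ffact1 m y %| ffact1 k y.
Proof. by move=> le_mk; rewrite /ffact1 -(subnKC le_mk) big_split_ord dvdp_mulIl. Qed.

(* The coordinates of y^n in the basis (ffact1 j y)_j; the recurrence comes from
   y * ffact1 j y = ffact1 j.+1 y + a_j * ffact1 j y. *)
Fixpoint stirling2 n j : {poly F} :=
  if n is n'.+1 then (if j is j'.+1 then stirling2 n' j' else 0) + a j * stirling2 n' j
  else (j == 0%N)%:R.

Lemma stirling2_gt n j : (n < j)%N -> stirling2 n j = 0.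
Proof. by elim: n j => [|n IH] [|j] //= lt_nj; rewrite !IH ?mulr0 ?addr0 // ltnW. Qed.

Lemma expr_ffact1 n M y : (n < M)%N ->
  y ^+ n = \sum_(j < M) stirling2 n j * ffact1 j y.
Proof.
elim: n M => [|n IH] M lt_nM.
  rewrite expr0 (bigD1 (Ordinal lt_nM)) //= /ffact1 big_ord0 mulr1 big1 ?addr0 // => j.
  by rewrite -val_eqE /= => /negbTE->; rewrite mul0r.
rewrite exprS (IH M (ltnW lt_nM)) mulr_sumr.
have mulX_ffact1 j : y * (stirling2 n j * ffact1 j y) =
    stirling2 n j * ffact1 j.+1 y + a j * stirling2 n j * ffact1 j y.
  by rewrite ffact1S; ring.
under eq_bigr => j _ do rewrite mulX_ffact1.
rewrite big_split /=; under [RHS]eq_bigr => j _ do rewrite /= mulrDl.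
rewrite big_split /=; congr (_ + _).
case: M lt_nM => [//|M] lt_nM.
rewrite [RHS]big_ord_recl /= mul0r add0r big_ord_recr /= stirling2_gt // mul0r addr0.
by apply: eq_bigr.
Qed.

Definition valf r N (k : {ffun 'I_r -> 'I_N}) : {ffun 'I_r -> nat} := [ffun i => val (k i)].

Lemma ffact_valf r N (k : {ffun 'I_r -> 'I_N}) x :
  ffact e (valf k) x = \prod_(i < r) ffact1 (k i) (x i).
Proof. by apply: eq_bigr => i _; rewrite ffunE. Qed.

Definition newton_coef r (P : mpoly F r) N (k : {ffun 'I_r -> 'I_N}) : {poly F} :=
  \sum_(m <- P) m.1 * \prod_(i < r) stirling2 (m.2 i) (k i).

Definition exps_lt r N (P : mpoly F r) : bool :=
  all (fun m : {poly F} * ('I_r -> nat) => [forall i, (m.2 i < N)%N]) P.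

Lemma exists_exps_lt r (P : mpoly F r) : exists N, exps_lt N P.
Proof.
elim: P => [|m P [N lt_PN]]; first by exists 0%N.
exists (maxn N (\sum_(i < r) m.2 i).+1); rewrite /exps_lt /=; apply/andP; split.
  by apply/forallP => i; rewrite leq_max ltnS (bigD1 i) //= leq_addr orbT.
move: lt_PN; apply: sub_all => m' /forallP lt_m'; apply/forallP => i.
by rewrite leq_max lt_m'.
Qed.

Lemma prod_expr_ffact r (n : 'I_r -> nat) N x : (forall i, (n i < N)%N) ->
  \prod_(i < r) x i ^+ n i =
  \sum_(k : {ffun 'I_r -> 'I_N}) (\prod_(i < r) stirling2 (n i) (k i)) * ffact e (valf k) x.
Proof.
move=> lt_nN; under eq_bigr => i _ do rewrite (expr_ffact1 (x i) (lt_nN i)).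
rewrite bigA_distr_bigA /=; apply: eq_bigr => k _.
by rewrite big_split /= ffact_valf.
Qed.

Lemma meval_newton r (P : mpoly F r) N x : exps_lt N P ->
  meval P x = \sum_(k : {ffun 'I_r -> 'I_N}) newton_coef P k * ffact e (valf k) x.
Proof.
elim: P => [|m P IH] /=.
  by rewrite /meval big_nil => _; rewrite big1 // => k _; rewrite /newton_coef big_nil mul0r.
case/andP=> /forallP lt_mN lt_PN.
rewrite /meval big_cons -/(meval P x) IH // (prod_expr_ffact x lt_mN) mulr_sumr -big_split.
by apply: eq_bigr => k _; rewrite /newton_coef big_cons mulrDl mulrA.
Qed.

Lemma dvdp_aprod_expq g d : size g = d.+1 -> g %| aprod e (q ^ d).
Proof.
move=> sg; have g0 : g != 0 by rewrite -size_poly_eq0 sg.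
have e1_neq0 : e 1 != 0.
  by apply/eqP; rewrite -e0 => /e_inj; rewrite !inE qq_gt1 qq_gt0 => /(_ isT isT).
set u := e 1 / lead_coef g; set p := a (q ^ d) - u *: g.
have u0 : u != 0 by rewrite mulf_neq0 // invr_eq0 lead_coef_eq0.
(* [u *: g] and [a (q ^ d)] have the same leading term [e 1 * 'X^d]. *)
have lt_pd : (size p <= d)%N.
  have : (size p <= d.+1)%N.
    apply: leq_trans (size_polyD _ _) _.
    rewrite size_polyN geq_max size_scale // sg leqnn andbT.
    by rewrite aa_expq // size_Cmul // size_polyXn.
  rewrite leq_eqVlt ltnS => /orP[/eqP sp|//].
  suff : lead_coef p == 0 by rewrite lead_coef_eq0 => /eqP p0; rewrite p0 size_poly0 in sp.
  rewrite /lead_coef sp coefB coefZ aa_expq // coefCM coefXn eqxx mulr1 /=.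
  by rewrite [g`_d](_ : _ = lead_coef g) ?mulfVK ?lead_coef_eq0 ?subrr // /lead_coef sg.
have [j lt_jq aj] := aa_onto e0 e_inj lt_pd.
rewrite /aprod (bigD1 (Ordinal lt_jq)) //= aj /p opprB addrC subrK.
by apply: dvdp_mulr; rewrite dvdpZr.
Qed.

Lemma dvdp_aprod_lam g : (1 < size g)%N -> g %| aprod e (lam e g).
Proof.
move=> g_gt1; rewrite /lam; set dvd_g := fun k => g %| aprod e k.
have sg : size g = (size g).-1.+1 by rewrite prednK // ltnW.
have has_dvd : has dvd_g (iota 1 (q ^ size g)).
  apply/hasP; exists (q ^ (size g).-1)%N; last exact: dvdp_aprod_expq sg.
  by rewrite mem_iota expn_gt0 qq_gt0 add1n ltnS leq_exp2l ?qq_gt1 ?leq_pred.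
have := nth_find 0%N has_dvd; rewrite nth_iota ?add1n //.
by rewrite -{2}(size_iota 1 (q ^ size g)) -has_find.
Qed.

Lemma aprod_dvdp_ffact r (k : {ffun 'I_r -> nat}) x :
  \prod_(i < r) aprod e (k i) %| ffact e k x.
Proof.
apply: (big_ind2 (fun u v => u %| v)) => [|u1 u2 v1 v2|i _]; first exact: dvdpp.
  exact: dvdp_mul.
exact: aprod_dvdp.
Qed.

Lemma dvdp_ffact_out_range r (fs : 'I_r -> {poly F}) g (k : {ffun 'I_r -> nat}) x :
  (1 < size g)%N -> admissible fs x -> ~~ in_range e fs g k -> g %| ffact e k x.
Proof.
move=> g_gt1 adm_x /forallPn[i]; rewrite -leqNgt geq_min /ffact (bigD1 i) //=.
case/orP=> [le_qk|le_lamk]; apply: dvdp_mulr.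
  have [j lt_j aj] := aa_onto e0 e_inj (adm_x i).
  by rewrite (bigD1 (Ordinal (leq_trans lt_j le_qk))) //= aj subrr mul0r dvdp0.
apply: dvdp_trans (dvdp_aprod_lam g_gt1) _.
exact: dvdp_trans (aprod_dvdp e0 e_inj _ (x i)) (ffact1_dvdp _ le_lamk).
Qed.

Lemma size_coef_ok r g (k : {ffun 'I_r -> nat}) b : g != 0 -> coef_ok e g k b ->
  (size b < size (g %/ gcdp g (\prod_(i < r) aprod e (k i)))%R)%N.
Proof.
move=> g0; have := divp_gcdp_neq0 (\prod_(i < r) aprod e (k i)) g0.
rewrite -size_poly_eq0 /coef_ok /pdeg => gq0 /orP[/eqP->|]; first by rewrite size_poly0 lt0n.
by case: (size b) => [|n] /=; rewrite ?lt0n // ltn_predRL.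
Qed.

Lemma in_range_lt_lam r (fs : 'I_r -> {poly F}) g (k : {ffun 'I_r -> nat}) i :
  in_range e fs g k -> (k i < lam e g)%N.
Proof. by move/forallP/(_ i)/leq_trans; apply; rewrite geq_minr. Qed.

Lemma in_range_lt_expq r (fs : 'I_r -> {poly F}) g (k : {ffun 'I_r -> nat}) i :
  in_range e fs g k -> (k i < q ^ pdeg (fs i))%N.
Proof. by move/forallP/(_ i)/leq_trans; apply; rewrite geq_minl. Qed.

Lemma ffsumB r (fs : 'I_r -> {poly F}) g (b b' : {ffun 'I_r -> nat} -> {poly F}) x :
  ffsum e fs g b' x - ffsum e fs g b x = ffsum e fs g (fun k => b' k - b k) x.
Proof. by rewrite /ffsum -sumrB; apply: eq_bigr => k _; rewrite mulrBl. Qed.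

Lemma ffact_aa_eq0 r (k l : {ffun 'I_r -> nat}) :
  ~~ [forall i, (l i <= k i)%N] -> ffact e l (fun i => a (k i)) = 0.
Proof.
case/forallPn=> i; rewrite -ltnNge => lt_ki.
by rewrite /ffact (bigD1 i) //= (bigD1 (Ordinal lt_ki)) //= subrr !mul0r.
Qed.

Lemma ffsum_aa r (fs : 'I_r -> {poly F}) g (c : {ffun 'I_r -> nat} -> {poly F})
    (k : {ffun 'I_r -> 'I_(lam e g)}) :
  in_range e fs g (valf k) ->
  (forall l, in_range e fs g (valf l) -> l != k ->
     (forall i, l i <= k i)%N -> c (valf l) = 0) ->
  ffsum e fs g c (fun i => a (valf k i)) = c (valf k) * \prod_(i < r) aprod e (valf k i).
Proof.
move=> k_in c0; rewrite /ffsum (bigD1 k) //= big1 ?addr0 // => l /andP[l_in ne_lk].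
have [/forallP le_lk|gt_lk] := boolP [forall i, (valf l i <= valf k i)%N].
  by rewrite c0 ?mul0r // => i; have := le_lk i; rewrite !ffunE.
by rewrite (ffact_aa_eq0 gt_lk) mulr0.
Qed.

Lemma ffsum_dvdp_eq0 r (fs : 'I_r -> {poly F}) g (c : {ffun 'I_r -> nat} -> {poly F}) :
  (1 < size g)%N ->
  (forall k, in_range e fs g k ->
     (size (c k) < size (g %/ gcdp g (\prod_(i < r) aprod e (k i)))%R)%N) ->
  (forall x, admissible fs x -> g %| ffsum e fs g c x) ->
  forall k, in_range e fs g k -> c k = 0.
Proof.
move=> g_gt1 small_c dvd_c; have g0 : g != 0 by rewrite -size_poly_eq0 -lt0n ltnW.
suff c0 (k : {ffun 'I_r -> 'I_(lam e g)}) : in_range e fs g (valf k) -> c (valf k) = 0.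
  move=> k k_in; have := c0 [ffun i => Ordinal (in_range_lt_lam i k_in)].
  by rewrite (_ : valf _ = k) => [->//|]; apply/ffunP => i; rewrite !ffunE.
move: {2}(\sum_(i < r) (k i : nat))%N (erefl (\sum_(i < r) (k i : nat))%N) => n.
elim/ltn_ind: n k => n IH k sum_k k_in.
have adm_k : admissible fs (fun i => a (valf k i)).
  by move=> i; apply: (size_aa e0); apply: in_range_lt_expq k_in.
have := dvd_c _ adm_k; rewrite (ffsum_aa k_in) => [|l l_in ne_lk le_lk].
  move/(divp_gcdp_dvdp g0) => dvd_ck; apply/eqP/negPn/negP => ck0.
  by have := small_c _ k_in; rewrite ltnNge dvdp_leq.
by apply: (IH _ _ l erefl l_in); rewrite -sum_k; apply: sum_ffun_ord_lt.
Qed.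

Lemma ffsum_regroup r (fs : 'I_r -> {poly F}) g N (C : {ffun 'I_r -> 'I_N} -> {poly F})
    x :
  \sum_(k : {ffun 'I_r -> 'I_N} | in_range e fs g (valf k)) C k * ffact e (valf k) x =
  ffsum e fs g (fun l => \sum_(k : {ffun 'I_r -> 'I_N} | valf k == l) C k) x.
Proof.
rewrite /ffsum; transitivity
  (\sum_(l : {ffun 'I_r -> 'I_(lam e g)} | in_range e fs g (valf l))
     \sum_(k : {ffun 'I_r -> 'I_N} | valf k == valf l) C k * ffact e (valf k) x); last first.
  by apply: eq_bigr => l _; rewrite mulr_suml; apply: eq_bigr => k /eqP->.
rewrite (exchange_big_dep (fun k => in_range e fs g (valf k))) => [|l k l_in /eqP->] //=.
apply: eq_bigr => k k_in; pose l : {ffun 'I_r -> 'I_(lam e g)} :=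
  [ffun i => Ordinal (in_range_lt_lam i k_in)].
have valf_l : valf l = valf k by apply/ffunP => i; rewrite !ffunE.
rewrite (big_pred1 l) // => l' /=; apply/andP/eqP => [[_ /eqP eq_kl']|->].
  apply/ffunP => i; apply/val_inj; rewrite ffunE /=.
  by have := congr1 (fun f : {ffun 'I_r -> nat} => f i) eq_kl'; rewrite !ffunE.
by rewrite -/(valf l) valf_l k_in eqxx.
Qed.

Lemma exists_ffsum_rep r (fs : 'I_r -> {poly F}) g (P : mpoly F r) :
  (1 < size g)%N -> exists2 b, coefs_ok e fs g b &
    forall x, admissible fs x -> g %| ffsum e fs g b x - meval P x.
Proof.
move=> g_gt1; have g0 : g != 0 by rewrite -size_poly_eq0 -lt0n ltnW.
have [N lt_PN] := exists_exps_lt P.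
pose S l := \sum_(k : {ffun 'I_r -> 'I_N} | valf k == l) newton_coef P k.
pose gq (l : {ffun 'I_r -> nat}) := g %/ gcdp g (\prod_(i < r) aprod e (l i)).
exists (fun l => S l %% gq l).
  move=> l _; rewrite /coef_ok /pdeg; have [//|S_neq0] := eqVneq (S l %% gq l) 0.
  rewrite ltn_predRL prednK ?ltn_modp ?divp_gcdp_neq0 //.
  by rewrite lt0n size_poly_eq0.
move=> x adm_x; rewrite (meval_newton x lt_PN).
rewrite (bigID (fun k => in_range e fs g (valf k))) /= ffsum_regroup.
rewrite opprD addrA ffsumB; apply: dvdp_sub; last first.
  by apply: dvdp_sum => k k_out; apply: dvdp_mull; apply: dvdp_ffact_out_range.
apply: dvdp_sum => l l_in; set k := [ffun i => val (l i)].
rewrite -/(S k) {2}(divp_eq (S k) (gq k)) opprD addrCA subrr addr0 mulNr dvdpNr -mulrA.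
apply/dvdp_mull/(dvdp_trans (dvdp_mul_divp_gcdp g (\prod_(i < r) aprod e (k i)))).
by apply: dvdp_mul => //; apply: aprod_dvdp_ffact.
Qed.
End Representation.

Theorem mainTheorem7 (F : finFieldType) (e : nat -> F)
  (e0 : e 0%N = 0) (e_inj : {in gtn #|F| &, injective e})
  (r : nat) (fs : 'I_r -> {poly F}) (g : {poly F})
  (fs_nc : forall i, (1 < size (fs i))%N) (g_nc : (1 < size g)%N)
  (f : ('I_r -> {poly F}) -> {poly F})
  (f_poly : is_poly_fun fs g f) :
  exists b : {ffun 'I_r -> nat} -> {poly F},
    [/\ coefs_ok e fs g b,
        represents fs g f (ffsum e fs g b) &
        forall b' : {ffun 'I_r -> nat} -> {poly F},
          coefs_ok e fs g b' -> represents fs g f (ffsum e fs g b') ->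
          forall k, in_range e fs g k -> b' k = b k].
Proof.
have g0 : g != 0 by rewrite -size_poly_eq0 -lt0n ltnW.
have [P P_f] := f_poly.
have [b b_ok b_P] := exists_ffsum_rep e0 e_inj fs P g_nc.
have b_f : represents fs g f (ffsum e fs g b).
  by move=> x adm_x; rewrite -(subrKA (meval P x)) dvdp_add ?b_P ?P_f.
exists b; split=> // b' b'_ok b'_f k k_in; apply/eqP; rewrite -subr_eq0; apply/eqP.
apply: (ffsum_dvdp_eq0 (c := fun l => b' l - b l) e0 g_nc _ _ k_in) => [l l_in|x adm_x].
  apply: leq_ltn_trans (size_polyD _ _) _; rewrite size_polyN gtn_max.
  by rewrite !size_coef_ok ?b_ok ?b'_ok.
by rewrite -ffsumB -(subrKA (f x)) dvdp_add ?b'_f // -opprB dvdpNr b_f.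
Qed.
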